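(* Define $a_0 = 0$ and $a_n = \sum_{k=0}^{n-1} k!\,(n-k-1)!$ for $n \geq 1$. Then for every natural number $n$, $$a_n = (-1)^{n-1} \sum_{k=0}^{n} G_k\, s(n,k).$$
   Context: The Genocchi numbers $G_n$ ($n \in \mathbb{N}$) are defined by the exponential generating function $\frac{2x}{e^x+1} = \sum_{n=0}^{\infty} G_n \frac{x^n}{n!}$. The (signed) Stirling numbers of the first kind $s(n,k)$ ($0 \le k \le n$) are the integers defined by the polynomial identity $X(X-1)\cdots(X-n+1) = \sum_{k=0}^{n} s(n,k) X^k$. *)

From mathcomp Require Import all_boot all_order all_algebra.
Set Implicit Arguments. Unset Strict Implicit. Unset Printing Implicit Defensive.
Import Order.TTheory GRing.Theory Num.Theory.
Local Open Scope ring_scope.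

Definition falling_poly (n : nat) : {poly int} :=
  \prod_(i < n) ('X - (i%:R)%:P).
Definition stirling1 (n k : nat) : int := (falling_poly n)`_k.

Definition a_seq (n : nat) : nat :=
  if n is 0 then 0%N else (\sum_(k < n) k`! * (n - k - 1)`!)%N.

(* G : nat -> rat is the Genocchi sequence iff the formal power series identity
   (e^x + 1) * sum_n G_n x^n/n! = 2x holds, i.e. comparing the coefficients of
   x^n/n! on both sides:  sum_{k=0}^n C(n,k) G_k + G_n = 2 [n = 1]. *)
Definition is_genocchi (G : nat -> rat) : Prop :=
  forall n : nat,
    \sum_(k < n.+1) 'C(n, k)%:R * G k + G n = (if n == 1%N then 2 else 0).

From mathcomp Require Import all_boot all_order all_algebra.
From mathcomp Require Import ring zify.
Set Implicit Arguments. Unset Strict Implicit. Unset Printing Implicit Defensive.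
Import GRing.Theory Num.Theory.
Local Open Scope ring_scope.

(* The Genocchi numbers are the moments of the linear functional
   [L : p |-> sum_i p_i G_i] on polynomials, and their generating function
   says exactly that [L (p (X + 1)) + L p = 2 p'(0)].  For the falling
   factorial [(X)_(n+1)], the shifted polynomial is
   [(X + 1) (X)_n = (X)_(n+1) + (n + 1) (X)_n], and [p'(0) = s(n+1, 1)]
   is [(-1)^n n!], so [b_n := L (X)_n = sum_k G_k s(n, k)] satisfies
   [2 b_(n+1) + (n + 1) b_n = 2 (-1)^n n!].  Splitting
   [n + 2 = (k + 1) + (n + 1 - k)] in each term of [a_(n+1)] shows
   [2 a_(n+2) = (n + 2) a_(n+1) + 2 (n + 1)!], so [(-1)^(n+1) a_n] obeys the
   same recurrence, and both sequences vanish at [n = 0]. *)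

Lemma fact_mul_fact_addSS k d :
  ((k + d).+2 * (k`! * d`!) = k.+1`! * d`! + k`! * d.+1`!)%N.
Proof. rewrite !factS; ring. Qed.

Lemma a_seqS n : a_seq n.+1 = (\sum_(k < n.+1) k`! * (n - k)`!)%N.
Proof. by apply: eq_bigr => k _; rewrite subnAC subSS subn0. Qed.

Lemma a_seq_rec n : (2 * a_seq n.+1 = n.+1 * a_seq n + 2 * n`!)%N.
Proof.
case: n => [|n]; first by rewrite a_seqS big_ord1.
pose T k := (k`! * (n.+1 - k)`!)%N.
have def_a2 : a_seq n.+2 = (\sum_(k < n.+2) T k)%N by rewrite a_seqS.
have def_a1 : (n.+2 * a_seq n.+1 = \sum_(k < n.+1) (T k.+1 + T k))%N.
  rewrite a_seqS big_distrr; apply: eq_bigr => k _; rewrite /T.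
  move: (nat_of_ord k) (ltn_ord k) => {}k lt_kn.
  have [d ->] : exists d, n = (k + d)%N by exists (n - k)%N; lia.
  by rewrite subSS subSn ?leq_addr // addKn; apply: fact_mul_fact_addSS.
have T0 : T 0%N = n.+1`! by rewrite /T subn0 fact0 mul1n.
have Tn : T n.+1 = n.+1`! by rewrite /T subnn fact0 muln1.
rewrite def_a2 def_a1 big_split /=.
have sumT_l : (\sum_(k < n.+2) T k = T 0 + \sum_(k < n.+1) T k.+1)%N.
  by rewrite big_ord_recl.
have sumT_r : (\sum_(k < n.+2) T k = \sum_(k < n.+1) T k + T n.+1)%N.
  by rewrite big_ord_recr.
by rewrite mul2n -addnn {1}sumT_l sumT_r T0 Tn; ring.
Qed.

Lemma falling_polyS n : falling_poly n.+1 = falling_poly n * ('X - n%:R%:P).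
Proof. by rewrite /falling_poly big_ord_recr. Qed.

Lemma falling_polySl n :
  falling_poly n.+1 = 'X * \prod_(i < n) ('X - i.+1%:R%:P).
Proof. by rewrite /falling_poly big_ord_recl polyC0 subr0. Qed.

Lemma size_falling_poly n : size (falling_poly n) = n.+1.
Proof. by rewrite size_prod_XsubC /index_enum unlock -enumT size_enum_ord. Qed.

Lemma stirling1_1 n : stirling1 n.+1 1 = (-1) ^+ n * n`!%:R.
Proof.
rewrite /stirling1 falling_polySl coefXM /= -horner_coef0 horner_prod.
under eq_bigr do rewrite hornerXsubC sub0r.
by rewrite prodrN card_ord -natr_prod fact_prod big_add1 big_mkord.
Qed.

Lemma falling_poly_shift n :
  falling_poly n.+1 \Po ('X + 1) = falling_poly n.+1 + n.+1%:R *: falling_poly n.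
Proof.
have -> : falling_poly n.+1 \Po ('X + 1) = ('X + 1) * falling_poly n.
  rewrite falling_polySl comp_polyM comp_polyX rmorph_prod; congr (_ * _).
  apply: eq_bigr => i _ /=; rewrite comp_polyB comp_polyX comp_polyC.
  by rewrite -addn1 natrD polyCD polyC1; ring.
by rewrite falling_polyS scaler_nat polyC_natr; ring.
Qed.

Section Umbral.

Variables (R : nzRingType) (G : nat -> R).

Definition umbral (p : {poly R}) : R := \sum_(i < size p) p`_i * G i.

Lemma umbral_wide n (p : {poly R}) :
  (size p <= n)%N -> umbral p = \sum_(i < n) p`_i * G i.
Proof.
move=> le_p_n; rewrite /umbral (big_ord_widen n (fun i => p`_i * G i) le_p_n).
rewrite big_mkcond; apply: eq_bigr => i _.
by case: ltnP => // /(nth_default 0) ->; rewrite mul0r.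
Qed.

Lemma umbralD (p q : {poly R}) : umbral (p + q) = umbral p + umbral q.
Proof.
pose n := maxn (size p) (size q).
rewrite !(@umbral_wide n) ?leq_maxl ?leq_maxr ?(leq_trans (size_polyD _ _)) //.
by rewrite -big_split; apply: eq_bigr => i _; rewrite coefD mulrDl.
Qed.

Lemma umbralZ c (p : {poly R}) : umbral (c *: p) = c * umbral p.
Proof.
rewrite (@umbral_wide (size p)) ?size_scale_leq // /umbral mulr_sumr.
by apply: eq_bigr => i _; rewrite coefZ mulrA.
Qed.

Lemma umbral_sum I (r : seq I) (P : pred I) (F : I -> {poly R}) :
  umbral (\sum_(i <- r | P i) F i) = \sum_(i <- r | P i) umbral (F i).
Proof. by apply: (big_morph _ umbralD); rewrite /umbral size_poly0 big_ord0. Qed.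

Lemma umbralXn i : umbral 'X^i = G i.
Proof.
rewrite /umbral size_polyXn big_ord_recr /= coefXn eqxx mul1r big1 ?add0r //.
by move=> k _; rewrite coefXn ltn_eqF ?mul0r.
Qed.

Lemma umbral_XaddC_exp i :
  umbral (('X + 1) ^+ i) = \sum_(k < i.+1) 'C(i, k)%:R * G k.
Proof.
rewrite exprD1n umbral_sum; apply: eq_bigr => k _.
by rewrite -scaler_nat umbralZ umbralXn.
Qed.

Lemma umbral_comp_XaddC (p : {poly R}) :
  umbral (p \Po ('X + 1)) =
  \sum_(i < size p) p`_i * \sum_(k < i.+1) 'C(i, k)%:R * G k.
Proof.
rewrite comp_polyE umbral_sum; apply: eq_bigr => i _.
by rewrite umbralZ umbral_XaddC_exp.
Qed.

End Umbral.

Section Genocchi.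

Variables (G : nat -> rat) (hG : is_genocchi G).

Local Notation falling_rat n := (map_poly (intr : int -> rat) (falling_poly n)).

Lemma genocchi0 : G 0 = 0.
Proof.
have := hG 0; rewrite big_ord1 bin0 mul1r -mulr2n => /eqP.
by rewrite mulrn_eq0 => /eqP.
Qed.

Lemma umbral_genocchi_shift p : umbral G (p \Po ('X + 1)) + umbral G p = 2 * p`_1.
Proof.
have coef1 : p`_1 = \sum_(i < size p) p`_i * (i == 1%N :> nat)%:R.
  rewrite -{1}[p]coefK poly_def coef_sum; apply: eq_bigr => i _.
  by rewrite coefZ coefXn eq_sym.
rewrite umbral_comp_XaddC /umbral -big_split coef1 mulr_sumr /=.
apply: eq_bigr => i _; rewrite -mulrDr hG mulrCA.
by case: (i == 1%N :> nat); rewrite ?mulr1 ?mulr0.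
Qed.

Lemma falling_rat_shift n :
  falling_rat n.+1 \Po ('X + 1) = falling_rat n.+1 + n.+1%:R *: falling_rat n.
Proof.
have -> : 'X + 1 = map_poly (intr : int -> rat) ('X + 1).
  by rewrite rmorphD /= map_polyX rmorph1.
by rewrite -map_comp_poly falling_poly_shift rmorphD /= map_polyZ rmorph_nat.
Qed.

Lemma umbral_falling_rec n :
  2 * umbral G (falling_rat n.+1) + n.+1%:R * umbral G (falling_rat n) =
  2 * ((-1) ^+ n * n`!%:R).
Proof.
have := umbral_genocchi_shift (falling_rat n.+1).
rewrite falling_rat_shift umbralD umbralZ coef_map -/(stirling1 _ _) stirling1_1.
by rewrite /= intrM intr_sign rmorph_nat => <-; ring.
Qed.

Lemma umbral_falling n : umbral G (falling_rat n) = (-1) ^+ n.+1 * (a_seq n)%:R.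
Proof.
elim: n => [|n IHn].
  by rewrite /falling_poly big_ord0 rmorph1 -(expr0 'X) umbralXn genocchi0 mulr0.
have /(congr1 (fun m => m%:R : rat)) := a_seq_rec n.
rewrite natrD !natrM => rec_a.
apply: (@mulfI _ 2) => //; rewrite mulrCA rec_a.
have := umbral_falling_rec n; rewrite IHn => /(canRL (addrK _)) ->.
rewrite !exprS; ring.
Qed.

End Genocchi.

Lemma signz_pred (F : fieldType) n : (-1 : F) ^ (n%:Z - 1) = (-1) ^+ n.+1.
Proof. by rewrite expfzDr ?oppr_eq0 ?oner_eq0 // exprN1 invrN1 -exprSr. Qed.

Theorem corollary2 (G : nat -> rat) (hG : is_genocchi G) (n : nat) :
  (a_seq n)%:R = (-1 : rat) ^ (n%:Z - 1)
                 * \sum_(k < n.+1) G k * (stirling1 n k)%:~R.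
Proof.
have -> : \sum_(k < n.+1) G k * (stirling1 n k)%:~R =
          umbral G (map_poly intr (falling_poly n)).
  rewrite (@umbral_wide _ _ n.+1) ?size_map_inj_poly ?size_falling_poly //.
    by apply: eq_bigr => k _; rewrite coef_map mulrC.
  exact: intr_inj.
by rewrite signz_pred umbral_falling // signrMK.
Qed.
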